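(* Let $\mathcal S,\mathcal W,\mathcal Z$ be measurable spaces and let $S,W,Z$ be the coordinate projections from $\mathcal S\times\mathcal W\times\mathcal Z$ onto $\mathcal S,\mathcal W,\mathcal Z$. Then the set $\{\pi\in\mathcal P(\mathcal S\times\mathcal W\times\mathcal Z): S\perp\!\!\!\perp_Z W \text{ under }\pi\}$ is closed under convergence in total variation, where $\mathcal P(\mathcal S\times\mathcal W\times\mathcal Z)$ is the set of probability measures on the product $\sigma$-algebra.
   Context: $S\perp\!\!\!\perp_Z W$ under $\pi$ means $\pi[S\in A,W\in B\mid Z]=\pi[S\in A\mid Z]\,\pi[W\in B\mid Z]$ $\pi$-a.s. for all measurable $A\subseteq\mathcal S$, $B\subseteq\mathcal W$ (equivalently $\pi[S\in A\mid W,Z]=\pi[S\in A\mid Z]$ $\pi$-a.s. for all measurable $A$). Convergence in total variation means $\sup_{C}|\pi^k(C)-\pi(C)|\to0$ over measurable sets $C$. *)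

From HB Require Import structures.
From mathcomp Require Import all_boot all_order all_algebra.
From mathcomp Require Import all_classical all_reals all_analysis.
Set Implicit Arguments. Unset Strict Implicit. Unset Printing Implicit Defensive.
Import Order.TTheory GRing.Theory Num.Theory.
Local Open Scope classical_set_scope.
Local Open Scope ring_scope.

(* The sample space is S * (W * Z) with the product sigma-algebra; the
   coordinate projections are  x.1 (S),  x.2.1 (W),  x.2.2 (Z). *)
Section Defs.
Context {dS dW dZ : measure_display}
  {S : measurableType dS} {W : measurableType dW} {Z : measurableType dZ}
  {R : realType}.

Definition triple := (S * (W * Z))%type.

(* [h] (a measurable function of z) is a version of the conditional
   probability  pi[ E | Z ], i.e. h o Z is sigma(Z)-measurable, integrable,
   and  int_{Z in C} h(Z) dpi = pi(E, Z in C)  for every measurable C. *)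
Definition is_condprob (pi : probability triple R) (E : set triple)
    (h : Z -> R) : Prop :=
  measurable_fun setT h /\
  pi.-integrable setT (fun x : triple => (h x.2.2)%:E) /\
  forall C : set Z, measurable C ->
    (\int[pi]_(x in [set x : triple | C x.2.2]) (h x.2.2)%:E =
     pi (E `&` [set x : triple | C x.2.2]))%E.

(* S is conditionally independent of W given Z under pi:
   pi[S in A, W in B | Z] = pi[S in A | Z] pi[W in B | Z]  pi-a.s. *)
Definition cond_indep_SW_Z (pi : probability triple R) : Prop :=
  forall (A : set S) (B : set W), measurable A -> measurable B ->
  forall hA hB hAB : Z -> R,
    is_condprob pi [set x : triple | A x.1] hA ->
    is_condprob pi [set x : triple | B x.2.1] hB ->
    is_condprob pi [set x : triple | A x.1 /\ B x.2.1] hAB ->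
    {ae pi, forall x : triple, hAB x.2.2 = hA x.2.2 * hB x.2.2}.

Definition tv_dist (pi1 pi2 : probability triple R) : \bar R :=
  ereal_sup [set `|(pi1 C - pi2 C)%E|%E | C in [set C : set triple | measurable C]].

Definition tv_converges (pik : nat -> probability triple R)
    (pi : probability triple R) : Prop :=
  (fun k => tv_dist (pik k) pi) @ \oo --> 0%E.

End Defs.

From HB Require Import structures.
From mathcomp Require Import all_boot all_order all_algebra.
From mathcomp Require Import all_classical all_reals all_analysis.
From mathcomp Require Import measurable_realfun ring lra.
Set Implicit Arguments. Unset Strict Implicit. Unset Printing Implicit Defensive.
Import Order.TTheory GRing.Theory Num.Theory.
Local Open Scope classical_set_scope.
Local Open Scope ring_scope.

(* Let pi_k -> pi in total variation, with S independent of W given Z under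
   every pi_k, and fix measurable A, B and versions a, b, c under pi of
   pi[S in A | Z], pi[W in B | Z] and pi[S in A, W in B | Z].  Versions lie in
   [0, 1] almost surely, so after truncating them to [0, 1] (which changes them
   only on a null set) all three are [0, 1]-valued measurable functions of Z.
   Two such functions agree a.s. as soon as their integrals over every event
   {Z in C} agree, so it suffices to compare these cylinder integrals for c and
   for a b.  Given eps, pick k with |pi_k(G) - pi(G)| <= eps for every event G,
   and [0, 1]-valued versions a_k, b_k, c_k under pi_k (they exist by
   Radon-Nikodym); then c_k = a_k b_k pi_k-a.s.  Three estimates conclude:
   integrals of [0, 1]-valued functions under pi_k and pi differ by at most
   eps (staircase approximation); the cylinder integrals of a_k - a under pi_k
   are at most 2 eps; and a [0, 1]-valued weight does not increase such a
   bound.  Altogether the two cylinder integrals differ by at most 6 eps. *)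

(* Under a probability all their integrals
   are finite, so the real-valued integral  \int[P]_x f x  behaves like a
   positive linear functional of mass one on them. *)
Section BoundedIntegral.
Context {d : measure_display} {T : measurableType d} {R : realType}.

Definition bounded_mfun (f : T -> R) : Prop :=
  measurable_fun setT f /\ exists M : R, forall x, `|f x| <= M.

Lemma bounded_integrable (P : probability T R) (f : T -> R) :
  bounded_mfun f -> P.-integrable setT (EFin \o f).
Proof.
move=> [mf [M hM]]; apply/integrableP; split; first exact/measurable_EFinP.
have intM : (\int[P]_(x in setT) M%:E = M%:E * P setT)%E by exact: integral_cst.
apply: (@le_lt_trans _ _ (\int[P]_(x in setT) M%:E)%E); last first.
  by rewrite intM probability_setT mule1 ltry.
apply: ge0_le_integral => //.
- by do 2 apply: measurableT_comp => //.
- by move=> x _; rewrite lee_fin (le_trans _ (hM x)).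
Qed.

Lemma bounded_cst (c : R) : bounded_mfun (fun=> c).
Proof. by split; [exact: measurable_cst | exists `|c|]. Qed.

Lemma bounded_indic (G : set T) : measurable G -> bounded_mfun (\1_G).
Proof.
move=> mG; split; first exact: measurable_indic.
by exists 1 => x; rewrite indicE; case: (_ \in _); rewrite ?normr0 ?normr1.
Qed.

Lemma bounded_01 (f : T -> R) :
  measurable_fun setT f -> (forall x, 0 <= f x <= 1) -> bounded_mfun f.
Proof.
move=> mf f01; split=> //; exists 1 => x.
by have /andP[f0 f1] := f01 x; rewrite ger0_norm.
Qed.

Lemma boundedD (f g : T -> R) :
  bounded_mfun f -> bounded_mfun g -> bounded_mfun (fun x => f x + g x).
Proof.
move=> [mf [M hM]] [mg [N hN]]; split; first exact: measurable_funD.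
by exists (M + N) => x; rewrite (le_trans (ler_normD _ _))// lerD.
Qed.

Lemma boundedB (f g : T -> R) :
  bounded_mfun f -> bounded_mfun g -> bounded_mfun (fun x => f x - g x).
Proof.
move=> [mf [M hM]] [mg [N hN]]; split; first exact: measurable_funB.
by exists (M + N) => x; rewrite (le_trans (ler_normB _ _))// lerD.
Qed.

Lemma boundedM (f g : T -> R) :
  bounded_mfun f -> bounded_mfun g -> bounded_mfun (fun x => f x * g x).
Proof.
move=> [mf [M hM]] [mg [N hN]]; split; first exact: measurable_funM.
by exists (M * N) => x; rewrite normrM ler_pM.
Qed.

Lemma bounded_sum (F : nat -> T -> R) (n : nat) :
  (forall j, bounded_mfun (F j)) -> bounded_mfun (fun x => \sum_(j < n) F j x).
Proof.
move=> hF; elim: n => [|n IH].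
  by under [X in bounded_mfun X]funext do rewrite big_ord0; exact: bounded_cst.
by under [X in bounded_mfun X]funext do rewrite big_ord_recr /=; exact: boundedD.
Qed.

Variable P : probability T R.

Lemma Rint_add (f g : T -> R) : bounded_mfun f -> bounded_mfun g ->
  \int[P]_x (f x + g x) = \int[P]_x f x + \int[P]_x g x.
Proof. by move=> bf bg; rewrite RintegralD//; exact: bounded_integrable. Qed.

Lemma Rint_sub (f g : T -> R) : bounded_mfun f -> bounded_mfun g ->
  \int[P]_x (f x - g x) = \int[P]_x f x - \int[P]_x g x.
Proof. by move=> bf bg; rewrite RintegralB//; exact: bounded_integrable. Qed.

Lemma Rint_scale (c : R) (f : T -> R) : bounded_mfun f ->
  \int[P]_x (c * f x) = c * \int[P]_x f x.
Proof. by move=> bf; rewrite RintegralZl//; exact: bounded_integrable. Qed.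

Lemma Rint_le (f g : T -> R) : bounded_mfun f -> bounded_mfun g ->
  (forall x, f x <= g x) -> \int[P]_x f x <= \int[P]_x g x.
Proof. by move=> bf bg fg; rewrite le_Rintegral//; exact: bounded_integrable. Qed.

Lemma Rint_cst (c : R) : \int[P]_x c = c.
Proof.
by rewrite Rintegral_cst// (congr1 fine (probability_setT P)) mulr1.
Qed.

Lemma Rint_indic (G : set T) : measurable G -> \int[P]_x \1_G x = fine (P G).
Proof. by move=> mG; rewrite /Rintegral integral_indic// setIT. Qed.

Lemma Rint_sum (F : nat -> T -> R) (n : nat) : (forall j, bounded_mfun (F j)) ->
  \int[P]_x (\sum_(j < n) F j x) = \sum_(j < n) \int[P]_x F j x.
Proof.
move=> hF; elim: n => [|n IH].
  by under eq_Rintegral do rewrite big_ord0; rewrite big_ord0 Rint_cst.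
under eq_Rintegral do rewrite big_ord_recr /=.
by rewrite Rint_add ?big_ord_recr ?IH//; exact: bounded_sum.
Qed.

Lemma Rint_norm_le (f : T -> R) (M : R) : bounded_mfun f ->
  (forall x, `|f x| <= M) -> `|\int[P]_x f x| <= M.
Proof.
move=> bf hM; have bM c : bounded_mfun (fun=> c) := bounded_cst c.
rewrite ler_norml -{1}(Rint_cst (- M)) -{2}(Rint_cst M).
by apply/andP; split; apply: Rint_le => // x; have := hM x; rewrite ler_norml => /andP[].
Qed.

Lemma Rint_ae_eq (f g : T -> R) : measurable_fun setT f -> measurable_fun setT g ->
  {ae P, forall x, f x = g x} -> \int[P]_x f x = \int[P]_x g x.
Proof.
move=> mf mg fg; rewrite /Rintegral; congr fine.
apply: ae_eq_integral => //; try exact/measurable_EFinP.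
by apply: filterS fg => x -> _.
Qed.

Lemma integral_set_Rint (f : T -> R) (D : set T) : bounded_mfun f ->
  measurable D ->
  (\int[P]_(x in D) (f x)%:E)%E = (\int[P]_x (f x * \1_D x))%:E.
Proof.
move=> bf mD.
have -> : \int[P]_x (f x * \1_D x) = \int[P]_(x in D) f x.
  rewrite [RHS]Rintegral_mkcond; apply: eq_Rintegral => x _.
  by rewrite patchE indicE; case: (x \in D); rewrite ?mulr1 ?mulr0.
rewrite /Rintegral fineK//; apply: integrable_fin_num => //.
exact: integrableS (bounded_integrable P bf).
Qed.

Lemma Rint_weight_ge0 (w F : T -> R) : bounded_mfun w -> bounded_mfun F ->
  (forall x, 0 <= w x <= 1) -> (forall x, 0 <= F x) ->
  0 <= \int[P]_x (w x * F x) <= \int[P]_x F x.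
Proof.
move=> bw bF w01 F0; have bwF := boundedM bw bF.
have b0 : bounded_mfun (fun _ : T => 0 : R) := bounded_cst 0.
apply/andP; split.
  rewrite -(Rint_cst 0); apply: Rint_le => // x.
  by have /andP[w0 _] := w01 x; rewrite mulr_ge0.
by apply: Rint_le => // x; have /andP[_ w1] := w01 x; rewrite ler_piMl.
Qed.

Lemma Rint_weight_le0 (w F : T -> R) : bounded_mfun w -> bounded_mfun F ->
  (forall x, 0 <= w x <= 1) -> (forall x, F x <= 0) ->
  \int[P]_x F x <= \int[P]_x (w x * F x) <= 0.
Proof.
move=> bw bF w01 F0; have bwF := boundedM bw bF.
have b0 : bounded_mfun (fun _ : T => 0 : R) := bounded_cst 0.
apply/andP; split.
  by apply: Rint_le => // x; have /andP[w0 w1] := w01 x; have := F0 x; nra.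
rewrite -(Rint_cst 0); apply: Rint_le => // x.
by have /andP[w0 _] := w01 x; rewrite mulr_ge0_le0.
Qed.

End BoundedIntegral.

Lemma measurable_preimageT {d d' : measure_display} {T : measurableType d}
    {U : measurableType d'} (f : T -> U) (B : set U) :
  measurable_fun setT f -> measurable B -> measurable (f @^-1` B).
Proof. by move=> mf mB; rewrite -[_ @^-1` _]setTI; exact: mf. Qed.

Lemma measurable_lt_set {d : measure_display} {T : measurableType d} {R : realType}
    (f g : T -> R) :
  measurable_fun setT f -> measurable_fun setT g -> measurable [set x | g x < f x].
Proof.
move=> mf mg; rewrite (_ : [set x | _] = (fun x => f x - g x) @^-1` `]0, +oo[).
  by apply: measurable_preimageT => //; exact: measurable_funB.
by apply/seteqP; split => x; rewrite /= in_itv /= andbT subr_gt0.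
Qed.

Section IntegralComparison.
Context {d : measure_display} {T : measurableType d} {R : realType}.

(* If  f <= g  fails, it fails on the set  {g < f}; so an integral
   inequality the other way on that set forces  f <= g  almost everywhere. *)
Lemma ae_le_of_integral_le (P : {measure set T -> \bar R}) (f g : T -> R) :
  P.-integrable setT (EFin \o f) -> P.-integrable setT (EFin \o g) ->
  (\int[P]_(x in [set x | (g x < f x)%R]) (f x)%:E <=
   \int[P]_(x in [set x | (g x < f x)%R]) (g x)%:E)%E ->
  {ae P, forall x, f x <= g x}.
Proof.
move=> fi gi hle; set D := [set x | g x < f x].
have mEFin h : P.-integrable setT (EFin \o h) -> measurable_fun setT h.
  by move=> hi; apply/measurable_EFinP; exact: measurable_int hi.
have mD : measurable D by apply: measurable_lt_set; exact: mEFin.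
have fD : P.-integrable D (EFin \o f) by exact: integrableS fi.
have gD : P.-integrable D (EFin \o g) by exact: integrableS gi.
have mfg : measurable_fun D (fun x => (f x)%:E - (g x)%:E)%E.
  exact: emeasurable_funB (measurable_int _ fD) (measurable_int _ gD).
have int_abs0 : (\int[P]_(x in D) `|(f x)%:E - (g x)%:E| = 0)%E.
  rewrite (eq_integral (fun x => (f x)%:E - (g x)%:E))%E; last first.
    by move=> x /set_mem Dx; rewrite -EFinB gee0_abs// lee_fin subr_ge0 ltW.
  apply/eqP; rewrite eq_le; apply/andP; split; first by rewrite integralB_EFin// sube_le0.
  by apply: integral_ge0 => x Dx; rewrite -EFinB lee_fin subr_ge0 ltW.
have [N [mN PN0 sN]] := (ae_eq_integral_abs P mD mfg).1 int_abs0.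
exists N; split=> // x /= /negP; rewrite -ltNge => gfx.
by apply: sN => /= /(_ gfx) /eqP; rewrite -EFinB eqe subr_eq0 (gt_eqF gfx).
Qed.

End IntegralComparison.

Lemma aeS2 {d : measure_display} {T : measurableType d} {R : realType}
    (P : {measure set T -> \bar R}) (A B C : T -> Prop) :
  (forall x, A x -> B x -> C x) ->
  {ae P, forall x, A x} -> {ae P, forall x, B x} -> {ae P, forall x, C x}.
Proof. by move=> ABC; exact: filterS2 ABC. Qed.

Section Staircase.
Context {R : realType}.

Definition staircase (n : nat) (y : R) : R := \sum_(j < n) ((j.+1%:R <= y)%R)%:R.

Lemma staircase_le_n n y : staircase n y <= n%:R.
Proof.
rewrite /staircase -[n in n%:R]card_ord -sumr_const.
by apply: ler_sum => j _; rewrite lern1 leq_b1.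
Qed.

Lemma staircase_le n y : 0 <= y -> staircase n y <= y.
Proof.
move=> y0; elim: n => [|n IH]; first by rewrite /staircase big_ord0.
rewrite /staircase big_ord_recr /=.
case: (leP (n.+1%:R) y) => [ny|_]; last by rewrite addr0.
by rewrite (le_trans _ ny)// -natr1 lerD// staircase_le_n.
Qed.

Lemma staircase_ge n y : y <= n%:R -> y - 1 <= staircase n y.
Proof.
elim: n y => [|n IH] y hy.
  by rewrite /staircase big_ord0 subr_le0 (le_trans hy)// ler01.
rewrite /staircase big_ord_recr /=.
have [yn|ny] := leP y n%:R.
  by rewrite (le_trans (IH _ yn))// lerDl.
have -> : \sum_(i < n) ((i.+1%:R <= y)%R)%:R = n%:R :> R.
  rewrite -[n in RHS]card_ord -sumr_const; apply: eq_bigr => i _.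
  by rewrite (le_trans _ (ltW ny))// ler_nat ltn_ord.
rewrite -natr1 in hy; apply: (@le_trans _ _ n%:R); first by rewrite lerBlDr.
by rewrite lerDl.
Qed.

End Staircase.

Section StairApproximation.
Context {d : measure_display} {T : measurableType d} {R : realType}.
Variables (F : T -> R) (mF : measurable_fun setT F).
Hypothesis F01 : forall x, 0 <= F x <= 1.

Definition level_set (n j : nat) : set T := [set x | j.+1%:R <= n%:R * F x].

Lemma measurable_level_set n j : measurable (level_set n j).
Proof.
rewrite /level_set -(preimage_itvcy (fun x => n%:R * F x)).
by apply: measurable_preimageT => //; apply: measurable_funM.
Qed.

Definition stair_approx (n : nat) (x : T) : R :=
  n%:R^-1 * \sum_(j < n) \1_(level_set n j) x.

Lemma bounded_stair_approx n : bounded_mfun (stair_approx n).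
Proof.
apply: boundedM; first exact: bounded_cst.
apply: (@bounded_sum _ _ _ (fun j => \1_(level_set n j))) => j.
exact/bounded_indic/measurable_level_set.
Qed.

Lemma stair_approx_close n x : (0 < n)%N -> `|F x - stair_approx n x| <= n%:R^-1.
Proof.
move=> n_gt0; have n0 : 0 < n%:R :> R by rewrite ltr0n.
rewrite /stair_approx; have /andP[F0 F1] := F01 x; set y := n%:R * F x.
have -> : \sum_(j < n) \1_(level_set n j) x = staircase n y.
  apply: eq_bigr => j _; rewrite indicE; congr ((nat_of_bool _)%:R).
  by apply/idP/idP => [/set_mem|h]; [|apply/mem_set].
have -> : F x = n%:R^-1 * y by rewrite /y mulKf ?gt_eqF.
rewrite -mulrBr normrM ger0_norm ?invr_ge0// ler_piMr ?invr_ge0//.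
have y0 : 0 <= y by rewrite mulr_ge0.
have yn : y <= n%:R by rewrite /y ler_piMr.
have := staircase_le n y0; have := staircase_ge yn.
by rewrite ler_norml => *; apply/andP; split; lra.
Qed.

Lemma Rint_stair_approx (P : probability T R) n :
  \int[P]_x stair_approx n x = n%:R^-1 * \sum_(j < n) fine (P (level_set n j)).
Proof.
have bl j : bounded_mfun (\1_(level_set n j)).
  exact/bounded_indic/measurable_level_set.
rewrite Rint_scale; last exact: (@bounded_sum _ _ _ (fun j => \1_(level_set n j))).
rewrite (@Rint_sum _ _ _ P (fun j => \1_(level_set n j)))//; congr (_ * _).
by apply: eq_bigr => j _; rewrite Rint_indic//; exact: measurable_level_set.
Qed.

End StairApproximation.

(* If two probabilities are within eps of each other on every event, the
   integrals of a measurable function with values in [0, 1] are within eps: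
   approximate the function uniformly by staircase functions, whose
   integrals are averages of probabilities of events. *)
Lemma Rint_diff_le_setwise {d : measure_display} {T : measurableType d}
    {R : realType} (mu nu : probability T R) (eps : R) (F : T -> R) :
  (forall G, measurable G -> `|fine (mu G) - fine (nu G)| <= eps) ->
  measurable_fun setT F -> (forall x, 0 <= F x <= 1) ->
  `|\int[mu]_x F x - \int[nu]_x F x| <= eps.
Proof.
move=> close mF F01; apply/ler_addgt0Pr => e e0.
pose n := (Num.truncn (2 / e)).+1.
have n0 : 0 < n%:R :> R by rewrite ltr0n.
have n_small : 2 / n%:R <= e.
  by rewrite ler_pdivrMr// mulrC -ler_pdivrMr//; exact/ltW/truncnS_gt.
have bF := bounded_01 mF F01.
have bS := bounded_stair_approx mF n.
have approx (P : probability T R) :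
    `|\int[P]_x F x - \int[P]_x stair_approx F n x| <= n%:R^-1.
  rewrite -Rint_sub//; apply: Rint_norm_le => [|x]; first exact: boundedB.
  exact: stair_approx_close.
have stair_close :
    `|\int[mu]_x stair_approx F n x - \int[nu]_x stair_approx F n x| <= eps.
  rewrite !(Rint_stair_approx mF) -mulrBr normrM ger0_norm ?invr_ge0//.
  rewrite -sumrB ler_pdivrMl// (le_trans (ler_norm_sum _ _ _))//.
  rewrite mulr_natl -[in X in _ <= X](card_ord n) -sumr_const ler_sum// => j _.
  exact/close/measurable_level_set.
move: (approx mu) (approx nu) stair_close n_small; rewrite !ler_norml.
by move=> /andP[? ?] /andP[? ?] /andP[? ?] ?; apply/andP; split; lra.
Qed.

Section Cylinders.
Context {dS dW dZ : measure_display}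
  {S : measurableType dS} {W : measurableType dW} {Z : measurableType dZ}
  {R : realType}.
Local Notation T := (@triple dS dW dZ S W Z).

Definition zcyl (C : set Z) : set T := [set x : T | C x.2.2].

Lemma measurable_projZ : measurable_fun setT (fun x : T => x.2.2).
Proof. exact: measurableT_comp. Qed.

Lemma measurable_zcyl (C : set Z) : measurable C -> measurable (zcyl C).
Proof. exact: measurable_preimageT measurable_projZ. Qed.

Lemma indic_zcyl (C : set Z) (x : T) : \1_(zcyl C) x = \1_C x.2.2 :> R.
Proof. by rewrite !indicE. Qed.

Lemma measurable_eventA (A : set S) : measurable A -> measurable [set x : T | A x.1].
Proof.
move=> mA; rewrite (_ : [set x : T | A x.1] = A `*` setT); first exact: measurableX.
by apply/seteqP; split => x /=; [move=> ?; split|case].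
Qed.

Lemma measurable_eventB (B : set W) : measurable B -> measurable [set x : T | B x.2.1].
Proof.
move=> mB; rewrite (_ : [set x : T | B x.2.1] = setT `*` (B `*` setT)).
  by apply: measurableX => //; exact: measurableX.
by apply/seteqP; split => x /=; [move=> ?; split|case => _ []].
Qed.

Lemma measurable_eventAB (A : set S) (B : set W) : measurable A -> measurable B ->
  measurable [set x : T | A x.1 /\ B x.2.1].
Proof.
move=> mA mB; rewrite (_ : [set x : T | A x.1 /\ B x.2.1] = A `*` (B `*` setT)).
  by apply: measurableX => //; exact: measurableX.
by apply/seteqP; split => x /=; [case=> ? ?; split|case => ? []].
Qed.

Definition unit_mfun (g : Z -> R) : Prop :=
  measurable_fun setT g /\ forall z, 0 <= g z <= 1.

Lemma measurable_unit_Z (g : Z -> R) : unit_mfun g ->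
  measurable_fun setT (fun x : T => g x.2.2).
Proof. by move=> [mg _]; exact: measurableT_comp mg measurable_projZ. Qed.

Lemma bounded_unit_Z (g : Z -> R) : unit_mfun g -> bounded_mfun (fun x : T => g x.2.2).
Proof.
move=> gu; apply: bounded_01; first exact: measurable_unit_Z.
by move=> x; exact: gu.2.
Qed.

Lemma unit_mfun_M (g h : Z -> R) : unit_mfun g -> unit_mfun h ->
  unit_mfun (fun z => g z * h z).
Proof.
move=> [mg g01] [mh h01]; split; first exact: measurable_funM.
move=> z; have /andP[g0 g1] := g01 z; have /andP[h0 h1] := h01 z.
by rewrite mulr_ge0// mulr_ile1.
Qed.

Lemma unit_mfun_diff (f g : Z -> R) : unit_mfun f -> unit_mfun g ->
  measurable_fun setT (fun z => f z - g z) /\ forall z, `|f z - g z| <= 1.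
Proof.
move=> [mf f01] [mg g01]; split; first exact: measurable_funB.
move=> z; have /andP[? ?] := f01 z; have /andP[? ?] := g01 z.
by rewrite ler_norml; apply/andP; split; lra.
Qed.

Lemma unit_cyl_01 (g : Z -> R) (C : set Z) (x : T) : unit_mfun g ->
  0 <= g x.2.2 * \1_(zcyl C) x <= 1.
Proof.
move=> [_ g01]; have /andP[g0 g1] := g01 x.2.2.
by rewrite indicE; case: (_ \in _); rewrite ?mulr1 ?mulr0 ?g0 ?g1 ?lexx ?ler01.
Qed.

End Cylinders.

Section Versions.
Context {dS dW dZ : measure_display}
  {S : measurableType dS} {W : measurableType dW} {Z : measurableType dZ}
  {R : realType}.
Local Notation T := (@triple dS dW dZ S W Z).

(* Every version of a conditional probability lies in [0, 1] almost surely: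
   its integral over  {Z in C}  is  P(E, Z in C), between 0 and  P(Z in C). *)
Lemma condprob_ae_unit (P : probability T R) (E : set T) (h : Z -> R) :
  measurable E -> is_condprob P E h -> {ae P, forall x : T, 0 <= h x.2.2 <= 1}.
Proof.
move=> mE [mh [hi hC]].
have cst_int (c : R) : P.-integrable setT (EFin \o fun _ : T => c).
  exact: bounded_integrable (bounded_cst c).
have h_ge0 : {ae P, forall x : T, 0 <= h x.2.2}.
  apply: ae_le_of_integral_le (cst_int 0) hi _.
  rewrite (_ : [set x : T | _] = zcyl [set z | h z < 0])//.
  rewrite hC; last by rewrite -preimage_itvNyo; exact: measurable_preimageT.
  by rewrite integral0 measure_ge0.
have h_le1 : {ae P, forall x : T, h x.2.2 <= 1}.
  apply: ae_le_of_integral_le hi (cst_int 1) _.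
  rewrite (_ : [set x : T | _] = zcyl [set z | 1 < h z])//.
  have mC : measurable [set z | 1 < h z].
    by rewrite -preimage_itvoy; exact: measurable_preimageT.
  rewrite hC// integral_cst ?mul1e; last exact: measurable_zcyl.
  have mEC := measurableI _ _ mE (measurable_zcyl mC).
  by apply: le_measure; rewrite ?inE//; exact: measurable_zcyl.
by apply: aeS2 h_ge0 h_le1 => x ->.
Qed.

Definition clip01 (h : Z -> R) : Z -> R := (h \max cst 0) \min cst 1.

Lemma clip01_unit (h : Z -> R) : measurable_fun setT h -> unit_mfun (clip01 h).
Proof.
move=> mh; split.
  apply: measurable_minr; last exact: measurable_cst.
  by apply: measurable_maxr => //; exact: measurable_cst.
move=> z; rewrite /clip01 /=; apply/andP; split.
  by rewrite le_min ler01 le_max lexx orbT.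
by rewrite ge_min lexx orbT.
Qed.

Lemma clip01_id (h : Z -> R) z : 0 <= h z <= 1 -> clip01 h z = h z.
Proof. by move=> /andP[h0 h1]; rewrite /clip01 /= max_l// min_l. Qed.

Lemma condprob_clip01 (P : probability T R) (E : set T) (h : Z -> R) :
  measurable E -> is_condprob P E h ->
  is_condprob P E (clip01 h) /\ {ae P, forall x : T, h x.2.2 = clip01 h x.2.2}.
Proof.
move=> mE hv; have [mh [hi hC]] := hv.
have hu := clip01_unit mh.
have h_clip : {ae P, forall x : T, h x.2.2 = clip01 h x.2.2}.
  by apply: filterS (condprob_ae_unit mE hv) => x /clip01_id ->.
split=> //; split; first exact: hu.1.
split; first exact/bounded_integrable/bounded_unit_Z.
move=> C mC; rewrite -hC//; apply: ae_eq_integral.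
- exact: measurable_zcyl.
- by apply/measurable_funTS/measurable_EFinP; exact: measurable_unit_Z.
- by apply/measurable_funTS/measurable_EFinP; exact: measurableT_comp mh measurable_projZ.
- by apply: filterS h_clip => x -> _.
Qed.

Lemma Rint_version_zcyl (P : probability T R) (E : set T) (g : Z -> R) (C : set Z) :
  unit_mfun g -> is_condprob P E g -> measurable C ->
  \int[P]_x (g x.2.2 * \1_(zcyl C) x) = fine (P (E `&` zcyl C)).
Proof.
move=> gu [_ [_ hC]] mC.
by rewrite -hC// (integral_set_Rint P (bounded_unit_Z gu) (measurable_zcyl mC)).
Qed.

End Versions.

(* Existence of versions: the law of  (E, Z in .)  is a finite measure on Z
   dominated by the law of Z, and its Radon-Nikodym derivative is a version
   of  P[E | Z]. *)
Section Existence.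
Context {dS dW dZ : measure_display}
  {S : measurableType dS} {W : measurableType dW} {Z : measurableType dZ}
  {R : realType}.
Local Notation T := (@triple dS dW dZ S W Z).

Definition projZ (x : T) : Z := x.2.2.
HB.instance Definition _ := isMeasurableFun.Build _ _ _ _ projZ measurable_projZ.

Variables (P : probability T R) (E : set T).
Hypothesis mE : measurable E.

Definition joint_law (C : set Z) : \bar R := P (E `&` zcyl C).

Let joint_law0 : joint_law set0 = 0%E.
Proof.
by rewrite /joint_law (_ : zcyl set0 = set0) ?setI0 ?measure0//; apply/seteqP; split.
Qed.

Let joint_law_ge0 C : (0 <= joint_law C)%E.
Proof. exact: measure_ge0. Qed.

Let joint_law_sigma_additive : semi_sigma_additive joint_law.
Proof.
move=> F mF tF mUF; rewrite /joint_law.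
have -> : E `&` zcyl (\bigcup_n F n) = \bigcup_n (E `&` zcyl (F n)).
  by apply/seteqP; split => [x [Ex [n _ Fx]]|x [n _ [Ex Fx]]];
    [exists n => //|split => //; exists n].
apply: measure_semi_sigma_additive.
- by move=> n; apply: measurableI => //; exact: measurable_zcyl.
- apply/trivIsetP => i j _ _ ij.
  move/trivIsetP : tF => /(_ _ _ Logic.I Logic.I ij) Fij.
  apply/seteqP; split => // x [[_ Fi] [_ Fj]].
  by have : (F i `&` F j) x.2.2 by []; rewrite Fij.
- by apply: bigcup_measurable => n _; apply: measurableI => //; exact: measurable_zcyl.
Qed.

HB.instance Definition _ := isMeasure.Build _ _ _ joint_law
  joint_law0 joint_law_ge0 joint_law_sigma_additive.

Let joint_law_finite : fin_num_fun joint_law.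
Proof.
move=> C mC; rewrite ge0_fin_numE ?measure_ge0// (le_lt_trans _ (ltry 1))//.
rewrite -(probability_setT P); apply: le_measure => //; rewrite inE//.
by apply: measurableI => //; exact: measurable_zcyl.
Qed.

HB.instance Definition _ := Measure_isFinite.Build _ _ _ joint_law joint_law_finite.

Lemma exists_version : exists h, is_condprob P E h.
Proof.
pose mu := distribution P projZ.
have dom : joint_law `<< mu.
  apply/null_content_dominatesP => C mC mu0.
  apply/eqP; rewrite -measure_le0 -mu0.
  apply: le_measure; rewrite ?inE//; last exact: measurable_zcyl.
  by apply: measurableI => //; exact: measurable_zcyl.
have [f [_ fi fE]] := radon_nikodym_finite dom.
pose h z := fine (f z).
have mh : measurable_fun setT h.
  by apply: measurableT_comp => //; exact: measurable_int fi.
have h_f : {ae mu, forall z, (h z)%:E = f z}.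
  have := integrable_ae measurableT fi; apply: filterS => z /(_ Logic.I).
  by move=> zf; rewrite /h fineK.
have hi : mu.-integrable setT (EFin \o h).
  apply/integrableP; split; first exact/measurable_EFinP.
  rewrite (ae_eq_integral (fun z => `|f z|)%E) //.
  - by case/integrableP : fi.
  - by apply: measurableT_comp => //; exact/measurable_EFinP.
  - by apply: measurableT_comp => //; exact: measurable_int fi.
  - by apply: filterS h_f => z hz _; exact: (congr1 abse hz).
have hPi : P.-integrable setT (fun x : T => (h x.2.2)%:E).
  apply/integrableP; split.
    by apply/measurable_EFinP; exact: (measurableT_comp mh measurable_projZ).
  have := (integrableP _ _ _ hi).2.
  rewrite ge0_integral_pushforward//.
  by apply: measurableT_comp => //; exact/measurable_EFinP.
exists h; split=> //; split=> // C mC.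
change (\int[P]_(x in zcyl C) (h x.2.2)%:E = joint_law C)%E; rewrite fE//.
transitivity (\int[mu]_(z in C) (h z)%:E)%E.
  rewrite (integral_pushforward measurable_projZ)//.
  - exact/measurable_EFinP.
  - by apply: integrableS hPi => //; exact: measurable_zcyl.
apply: ae_eq_integral => //.
- exact/measurable_funTS/measurable_EFinP.
- exact: measurable_funTS (measurable_int _ fi).
- by apply: filterS h_f => z -> _.
Qed.

End Existence.

Lemma exists_unit_version {dS dW dZ : measure_display}
    {S : measurableType dS} {W : measurableType dW} {Z : measurableType dZ}
    {R : realType} (P : probability (@triple dS dW dZ S W Z) R) (E : set _) :
  measurable E -> exists g, unit_mfun g /\ is_condprob P E g.
Proof.
move=> mE; have [h hv] := exists_version P mE.
exists (clip01 h); split; first exact/clip01_unit/hv.1.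
exact: (condprob_clip01 mE hv).1.
Qed.

Section Approximation.
Context {dS dW dZ : measure_display}
  {S : measurableType dS} {W : measurableType dW} {Z : measurableType dZ}
  {R : realType}.
Local Notation T := (@triple dS dW dZ S W Z).

Lemma tv_converges_setwise (pik : nat -> probability T R) (pi : probability T R)
    (eps : R) : tv_converges pik pi -> 0 < eps ->
  exists k, forall G, measurable G -> `|fine (pik k G) - fine (pi G)| <= eps.
Proof.
move=> /fine_cvgP [tv_fin tv_cvg] e0.
have tv_small : \forall k \near \oo, `|fine (tv_dist (pik k) pi)| < eps.
  by move/cvgr0Pnorm_lt : tv_cvg; apply.
have [N _ HN] := filterS2 _ (fun k a b => conj a b) tv_fin tv_small.
have [tv_finN tv_ltN] := HN N (leqnn N).
exists N => G mG.
have le_tv : (`|(pik N G - pi G)%E| <= tv_dist (pik N) pi)%E.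
  by apply: ereal_sup_ubound; exists G.
rewrite -(fineK tv_finN) -(fineK (fin_num_measure _ _ mG)) in le_tv.
rewrite -[X in (_ - X)%E](fineK (fin_num_measure pi _ mG)) -EFinB lee_fin in le_tv.
by rewrite (le_trans le_tv)// (le_trans (ler_norm _))// ltW.
Qed.

(* A [0, 1]-valued weight w does not increase the bound on the cylinder
   integrals of a function u: split {Z in C} according to the sign of u. *)
Lemma weighted_cyl_bound (Q : probability T R) (u w : Z -> R) (C : set Z)
    (delta : R) :
  measurable_fun setT u -> (forall z, `|u z| <= 1) -> unit_mfun w ->
  measurable C ->
  (forall D, measurable D -> `|\int[Q]_x (u x.2.2 * \1_(zcyl D) x)| <= delta) ->
  `|\int[Q]_x (u x.2.2 * w x.2.2 * \1_(zcyl C) x)| <= delta.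
Proof.
move=> mu u1 wu mC u_cyl.
pose U := [set z | 0 < u z].
have mU : measurable U by rewrite /U -preimage_itvoy; exact: measurable_preimageT.
have mCU : measurable (C `&` U) by exact: measurableI.
have mCnU : measurable (C `&` ~` U) by apply: measurableI => //; exact: measurableC.
pose Gp (x : T) := u x.2.2 * \1_(zcyl (C `&` U)) x.
pose Gm (x : T) := u x.2.2 * \1_(zcyl (C `&` ~` U)) x.
have bu : bounded_mfun (fun x : T => u x.2.2).
  by split; [exact: measurableT_comp mu measurable_projZ|exists 1].
have bw : bounded_mfun (fun x : T => w x.2.2) := bounded_unit_Z wu.
have bGp : bounded_mfun Gp by apply: boundedM bu _; exact: bounded_indic (measurable_zcyl mCU).
have bGm : bounded_mfun Gm by apply: boundedM bu _; exact: bounded_indic (measurable_zcyl mCnU).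
have Gp_ge0 x : 0 <= Gp x.
  rewrite /Gp indic_zcyl indicE in_setI; case: (x.2.2 \in C); last by rewrite mulr0.
  by case: (boolP (x.2.2 \in U)) => [/set_mem/ltW|]; rewrite ?mulr1 ?mulr0.
have Gm_le0 x : Gm x <= 0.
  rewrite /Gm indic_zcyl indicE in_setI in_setC; case: (x.2.2 \in C); last by rewrite mulr0.
  case: (boolP (x.2.2 \in U)) => [|/negP Ux]; first by rewrite mulr0.
  by rewrite mulr1 leNgt; apply/negP => /mem_set.
have splitC x : u x.2.2 * w x.2.2 * \1_(zcyl C) x = w x.2.2 * Gp x + w x.2.2 * Gm x.
  rewrite /Gp /Gm !indic_zcyl !indicE !in_setI in_setC.
  by case: (_ \in C); case: (_ \in U); rewrite /=; ring.
under eq_Rintegral do rewrite splitC.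
rewrite Rint_add; [|exact: boundedM bw bGp|exact: boundedM bw bGm].
have w01 (x : T) : 0 <= w x.2.2 <= 1 by exact: wu.2.
have wGp : 0 <= \int[Q]_x (w x.2.2 * Gp x) <= \int[Q]_x Gp x.
  exact: Rint_weight_ge0.
have wGm : \int[Q]_x Gm x <= \int[Q]_x (w x.2.2 * Gm x) <= 0.
  exact: Rint_weight_le0.
have Gp_int : `|\int[Q]_x Gp x| <= delta by exact: u_cyl.
have Gm_int : `|\int[Q]_x Gm x| <= delta by exact: u_cyl.
move: wGp wGm Gp_int Gm_int; rewrite !ler_norml.
by move=> /andP[? ?] /andP[? ?] /andP[? ?] /andP[? ?]; apply/andP; split; lra.
Qed.

(* If Q and pi are eps-close on events, [0, 1]-valued versions a (under pi)
   and ak (under Q) of the conditional probability of the same event have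
   cylinder integrals under Q within 2 eps: both are close to  Q(E, Z in D). *)
Lemma version_gap_bound (Q pi : probability T R) (E : set T) (a ak : Z -> R)
    (eps : R) : measurable E ->
  unit_mfun a -> is_condprob pi E a -> unit_mfun ak -> is_condprob Q E ak ->
  (forall G, measurable G -> `|fine (Q G) - fine (pi G)| <= eps) ->
  forall D, measurable D ->
  `|\int[Q]_x ((ak x.2.2 - a x.2.2) * \1_(zcyl D) x)| <= eps + eps.
Proof.
move=> mE au va aku vak close D mD.
have bD := bounded_indic (measurable_zcyl mD) : bounded_mfun (\1_(zcyl D) : T -> R).
under eq_Rintegral do rewrite mulrBl.
rewrite Rint_sub; [|exact: boundedM (bounded_unit_Z aku) bD|exact: boundedM (bounded_unit_Z au) bD].
rewrite (Rint_version_zcyl aku vak mD).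
have a_Q_pi := Rint_diff_le_setwise close
  (measurable_funM (measurable_unit_Z au) (measurable_indic (measurable_zcyl mD)))
  (fun x => unit_cyl_01 D x au).
have Q_pi := close _ (measurableI _ _ mE (measurable_zcyl mD)).
move: a_Q_pi Q_pi; rewrite (Rint_version_zcyl au va mD) !ler_norml.
by move=> /andP[? ?] /andP[? ?]; apply/andP; split; lra.
Qed.

End Approximation.

Section Limit.
Context {dS dW dZ : measure_display}
  {S : measurableType dS} {W : measurableType dW} {Z : measurableType dZ}
  {R : realType}.
Local Notation T := (@triple dS dW dZ S W Z).

(* If Q and pi are eps-close on events, then trading the [0, 1]-valued
   versions under Q of two events for those under pi changes the cylinder
   integrals of their product under Q by at most 4 eps:
   ak bk - a b = (ak - a) bk + (bk - b) a. *)
Lemma product_versions_gap (Q pi : probability T R) (E1 E2 : set T)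
    (a b ak bk : Z -> R) (eps : R) (C : set Z) :
  (forall G, measurable G -> `|fine (Q G) - fine (pi G)| <= eps) ->
  measurable E1 -> measurable E2 ->
  unit_mfun a -> is_condprob pi E1 a -> unit_mfun b -> is_condprob pi E2 b ->
  unit_mfun ak -> is_condprob Q E1 ak -> unit_mfun bk -> is_condprob Q E2 bk ->
  measurable C ->
  `|\int[Q]_x (ak x.2.2 * bk x.2.2 * \1_(zcyl C) x) -
    \int[Q]_x (a x.2.2 * b x.2.2 * \1_(zcyl C) x)| <= 4 * eps.
Proof.
move=> close mE1 mE2 au va bu vb aku vak bku vbk mC.
have [ma_d a_d1] := unit_mfun_diff aku au.
have [mb_d b_d1] := unit_mfun_diff bku bu.
have a_step := weighted_cyl_bound ma_d a_d1 bku mC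
  (version_gap_bound mE1 au va aku vak close).
have b_step := weighted_cyl_bound mb_d b_d1 au mC
  (version_gap_bound mE2 bu vb bku vbk close).
have bC : bounded_mfun (\1_(zcyl C) : T -> R) := bounded_indic (measurable_zcyl mC).
have bZ (f : Z -> R) : unit_mfun f -> bounded_mfun (fun x : T => f x.2.2).
  exact: bounded_unit_Z.
have bd (f g h : Z -> R) : unit_mfun f -> unit_mfun g -> unit_mfun h ->
    bounded_mfun (fun x : T => (f x.2.2 - g x.2.2) * h x.2.2 * \1_(zcyl C) x).
  move=> fu gu hu; apply: boundedM => //.
  by apply: boundedM; [exact: boundedB (bZ _ fu) (bZ _ gu)|exact: bZ].
have bp (f g : Z -> R) : unit_mfun f -> unit_mfun g ->
    bounded_mfun (fun x : T => f x.2.2 * g x.2.2 * \1_(zcyl C) x).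
  by move=> fu gu; apply: boundedM => //; exact: boundedM (bZ _ fu) (bZ _ gu).
rewrite (_ : _ - _ =
    \int[Q]_x ((ak x.2.2 - a x.2.2) * bk x.2.2 * \1_(zcyl C) x) +
    \int[Q]_x ((bk x.2.2 - b x.2.2) * a x.2.2 * \1_(zcyl C) x)).
  move: a_step b_step; rewrite !ler_norml => /andP[? ?] /andP[? ?].
  by apply/andP; split; lra.
rewrite -Rint_sub; [|by apply: bp|by apply: bp].
rewrite -Rint_add; [|by apply: bd|by apply: bd].
by apply: eq_Rintegral => x _; ring.
Qed.

Lemma product_cyl_gap (Q pi : probability T R) (A : set S) (B : set W)
    (a b c : Z -> R) (eps : R) (C : set Z) :
  cond_indep_SW_Z Q ->
  (forall G, measurable G -> `|fine (Q G) - fine (pi G)| <= eps) ->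
  measurable A -> measurable B -> unit_mfun a -> unit_mfun b -> unit_mfun c ->
  is_condprob pi [set x : T | A x.1] a -> is_condprob pi [set x : T | B x.2.1] b ->
  is_condprob pi [set x : T | A x.1 /\ B x.2.1] c -> measurable C ->
  `|\int[pi]_x (c x.2.2 * \1_(zcyl C) x) -
    \int[pi]_x (a x.2.2 * b x.2.2 * \1_(zcyl C) x)| <= 6 * eps.
Proof.
move=> ciQ close mA mB au bu cu va vb vc mC.
have mEA : measurable [set x : T | A x.1] := measurable_eventA mA.
have mEB : measurable [set x : T | B x.2.1] := measurable_eventB mB.
have mEAB : measurable [set x : T | A x.1 /\ B x.2.1] := measurable_eventAB mA mB.
have [ak [aku vak]] := exists_unit_version Q mEA.
have [bk [bku vbk]] := exists_unit_version Q mEB.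
have [ck [cku vck]] := exists_unit_version Q mEAB.
have bC : bounded_mfun (\1_(zcyl C) : T -> R) := bounded_indic (measurable_zcyl mC).
have ck_akbk : \int[Q]_x (ck x.2.2 * \1_(zcyl C) x) =
               \int[Q]_x (ak x.2.2 * bk x.2.2 * \1_(zcyl C) x).
  apply: Rint_ae_eq; [exact: (boundedM (bounded_unit_Z cku) bC).1|
    exact: (boundedM (bounded_unit_Z (unit_mfun_M aku bku)) bC).1|].
  by apply: filterS (ciQ A B mA mB ak bk ck vak vbk vck) => x ->.
have c_step := close _ (measurableI _ _ mEAB (measurable_zcyl mC)).
rewrite -(Rint_version_zcyl cku vck mC) ck_akbk -(Rint_version_zcyl cu vc mC) in c_step.
have ab_step := product_versions_gap close mEA mEB au va bu vb aku vak bku vbk mC.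
have pi_step := Rint_diff_le_setwise close
  (measurable_funM (measurable_unit_Z (unit_mfun_M au bu))
                   (measurable_indic (measurable_zcyl mC)))
  (fun x => unit_cyl_01 C x (unit_mfun_M au bu)).
move: c_step ab_step pi_step; rewrite !ler_norml.
by move=> /andP[? ?] /andP[? ?] /andP[? ?]; apply/andP; split; lra.
Qed.

Lemma product_cyl_eq (pik : nat -> probability T R) (pi : probability T R)
    (A : set S) (B : set W) (a b c : Z -> R) :
  (forall k, cond_indep_SW_Z (pik k)) -> tv_converges pik pi ->
  measurable A -> measurable B -> unit_mfun a -> unit_mfun b -> unit_mfun c ->
  is_condprob pi [set x : T | A x.1] a -> is_condprob pi [set x : T | B x.2.1] b ->
  is_condprob pi [set x : T | A x.1 /\ B x.2.1] c ->
  forall C, measurable C ->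
  \int[pi]_x (c x.2.2 * \1_(zcyl C) x) = \int[pi]_x (a x.2.2 * b x.2.2 * \1_(zcyl C) x).
Proof.
move=> ci tv mA mB au bu cu va vb vc C mC.
apply/eqP; rewrite -subr_eq0 -normr_eq0 eq_le normr_ge0 andbT.
apply/ler_addgt0Pr => e e0; rewrite add0r.
have [k close] := tv_converges_setwise tv (divr_gt0 e0 (ltr0n _ 6)).
have := product_cyl_gap (ci k) close mA mB au bu cu va vb vc mC.
by rewrite mulrC divfK ?pnatr_eq0.
Qed.

Lemma ae_eq_of_zcyl_integrals (P : probability T R) (f g : Z -> R) :
  unit_mfun f -> unit_mfun g ->
  (forall C, measurable C ->
     \int[P]_x (f x.2.2 * \1_(zcyl C) x) = \int[P]_x (g x.2.2 * \1_(zcyl C) x)) ->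
  {ae P, forall x : T, f x.2.2 = g x.2.2}.
Proof.
have ae_le (f' g' : Z -> R) : unit_mfun f' -> unit_mfun g' ->
    (forall C, measurable C -> \int[P]_x (f' x.2.2 * \1_(zcyl C) x) =
                                \int[P]_x (g' x.2.2 * \1_(zcyl C) x)) ->
    {ae P, forall x : T, f' x.2.2 <= g' x.2.2}.
  move=> fu gu eqC.
  have bf : bounded_mfun (fun x : T => f' x.2.2) := bounded_unit_Z fu.
  have bg : bounded_mfun (fun x : T => g' x.2.2) := bounded_unit_Z gu.
  apply: ae_le_of_integral_le; try exact: bounded_integrable.
  have mC : measurable [set z | g' z < f' z].
    by apply: measurable_lt_set; [exact: fu.1|exact: gu.1].
  rewrite (_ : [set x : T | _] = zcyl [set z | g' z < f' z])//.
  have mzC : measurable (zcyl [set z | g' z < f' z] : set T) := measurable_zcyl mC.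
  by rewrite (integral_set_Rint P bf mzC) (integral_set_Rint P bg mzC) eqC.
move=> fu gu eqC; apply: aeS2 (ae_le _ _ fu gu eqC) (ae_le _ _ gu fu _) => [x ? ?|C mC].
  by apply/eqP; rewrite eq_le; apply/andP.
by rewrite eqC.
Qed.

End Limit.

(* Truncate the given versions to [0, 1], identify the truncated joint version
   with the product of the truncated marginal ones through their cylinder
   integrals, and undo the truncation on a null set. *)
Theorem mainTheorem9 (dS dW dZ : measure_display)
  (S : measurableType dS) (W : measurableType dW) (Z : measurableType dZ)
  (R : realType)
  (pik : nat -> probability (S * (W * Z))%type R)
  (pi : probability (S * (W * Z))%type R) :
  (forall k, cond_indep_SW_Z (pik k)) ->
  tv_converges pik pi ->
  cond_indep_SW_Z pi.
Proof.
move=> ci tv A B mA mB hA hB hAB vA vB vAB.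
have [vA' eA] := condprob_clip01 (measurable_eventA mA) vA.
have [vB' eB] := condprob_clip01 (measurable_eventB mB) vB.
have [vAB' eAB] := condprob_clip01 (measurable_eventAB mA mB) vAB.
have [uA uB uAB] := And3 (clip01_unit vA.1) (clip01_unit vB.1) (clip01_unit vAB.1).
have clip_factor := ae_eq_of_zcyl_integrals uAB (unit_mfun_M uA uB)
  (product_cyl_eq ci tv mA mB uA uB uAB vA' vB' vAB').
have eAeB : {ae pi, forall x, hA x.2.2 * hB x.2.2 = clip01 hA x.2.2 * clip01 hB x.2.2}.
  by apply: aeS2 eA eB => x -> ->.
have eAB_factor : {ae pi, forall x, hAB x.2.2 = clip01 hA x.2.2 * clip01 hB x.2.2}.
  by apply: aeS2 eAB clip_factor => x -> ->.
by apply: aeS2 eAeB eAB_factor => x -> ->.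
Qed.
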